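(* Let $n\ge 3$ and let $q$ be a real number with $0<q\le 1/6$. Consider the Markov chain on $\{0,1,\dots,n-1\}$ with $n\times n$ transition probability matrix $\mathbf P(q)=(P_{ij})$ given by: $P_{00}=1-q$, $P_{01}=q$; $P_{10}=5q$, $P_{11}=1-6q$, $P_{12}=q$; for $2\le i\le n-2$: $P_{i0}=4q$, $P_{i,i-1}=q$, $P_{ii}=1-6q$, $P_{i,i+1}=q$; $P_{n-1,0}=5q$, $P_{n-1,n-2}=q$, $P_{n-1,n-1}=1-6q$; all other entries $0$. Then the steady state probability vector $\vec\pi=(\pi_0,\dots,\pi_{n-1})$ (the unique probability vector with $\vec\pi=\vec\pi\mathbf P(q)$) is given by $\pi_i=\dfrac{2B_{n-i}}{b_{n+1}}=\dfrac{B_{n-i}}{\sum_{l=1}^n B_l}$ for $i=0,1,\dots,n-1$; in particular it does not depend on $q$.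
   Context: The balancing numbers $B_m$ are defined by $B_0=0$, $B_1=1$, $B_{m+1}=6B_m-B_{m-1}$. The cobalancing numbers $b_m$ are defined by $b_0=0$, $b_1=0$, $b_{m+1}=6b_m-b_{m-1}+2$. *)

From HB Require Import structures.
From mathcomp Require Import all_boot all_order all_algebra.
Set Implicit Arguments. Unset Strict Implicit. Unset Printing Implicit Defensive.
Import Order.TTheory GRing.Theory Num.Theory.
Local Open Scope ring_scope.

Fixpoint bal (m : nat) : int :=
  match m with
  | 0%N => 0
  | 1%N => 1
  | (k.+1) as m1 => 6 * bal k - bal k.-1
  end.

Fixpoint cobal (m : nat) : int :=
  match m with
  | 0%N => 0
  | 1%N => 0
  | (k.+1) as m1 => 6 * cobal k - cobal k.-1 + 2
  end.

Definition Pentry {R : ringType} (n : nat) (q : R) (i j : nat) : R :=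
  if i == 0%N then
    (if j == 0%N then 1 - q else if j == 1%N then q else 0)
  else if i == 1%N then
    (if j == 0%N then 5 * q else if j == 1%N then 1 - 6 * q
     else if j == 2%N then q else 0)
  else if i == n.-1 then
    (if j == 0%N then 5 * q else if j == n.-2 then q
     else if j == n.-1 then 1 - 6 * q else 0)
  else
    (if j == 0%N then 4 * q else if j == i.-1 then q
     else if j == i then 1 - 6 * q else if j == i.+1 then q else 0).

Definition Pmat {R : ringType} (n : nat) (q : R) : 'M[R]_n :=
  \matrix_(i < n, j < n) Pentry n q i j.

Definition is_prob_vec {R : numDomainType} (n : nat) (p : 'rV[R]_n) : Prop :=
  (forall i, 0 <= p 0 i) /\ \sum_(i < n) p 0 i = 1.

(** Away from state 0, the balance equation of column j of P(q) reads
    q (π_{j-1} - 6 π_j + π_{j+1}) = 0 with π_n = 0, so read backwards from the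
    last state every stationary vector is a multiple of (B_n, B_{n-1}, ..., B_1).
    Conversely, this vector also balances column 0, which amounts to the identity
    5 B_n - B_{n-1} - 1 = 4 (B_1 + ... + B_n); normalising it with
    b_{n+1} = 2 (B_1 + ... + B_n) gives the stationary distribution. *)

From HB Require Import structures.
From mathcomp Require Import all_boot all_order all_algebra.
From mathcomp Require Import zify ring.
Set Implicit Arguments. Unset Strict Implicit. Unset Printing Implicit Defensive.
Import Order.TTheory GRing.Theory Num.Theory.
Local Open Scope ring_scope.

Lemma balSS k : bal k.+2 = 6 * bal k.+1 - bal k.
Proof. by []. Qed.

Lemma cobalSS k : cobal k.+2 = 6 * cobal k.+1 - cobal k + 2.
Proof. by []. Qed.

Lemma bal_ge0 k : 0 <= bal k.
Proof.
suff /andP[] : 0 <= bal k <= bal k.+1 by [].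
by elim: k => [|k IH] //; rewrite balSS; lia.
Qed.

Definition balsum k : int := \sum_(1 <= l < k.+1) bal l.

Lemma balsum0 : balsum 0 = 0.
Proof. by rewrite /balsum big_geq. Qed.

Lemma balsumS k : balsum k.+1 = balsum k + bal k.+1.
Proof. by rewrite /balsum big_nat_recr. Qed.

Lemma balsum_gt0 k : 0 < balsum k.+1.
Proof.
elim: k => [|k IH]; first by rewrite balsumS balsum0.
by rewrite balsumS; have := bal_ge0 k.+2; lia.
Qed.

Lemma balsumSS k : balsum k.+2 = 6 * balsum k.+1 - balsum k + 1.
Proof.
elim: k => [|k IH]; first by rewrite !balsumS balsum0.
by have := balsumS k.+2; have := balsumS k.+1; have := balsumS k;
   have := balSS k.+1; lia.
Qed.

Lemma cobal_balsum k : cobal k.+1 = 2 * balsum k.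
Proof.
suff [] : cobal k.+1 = 2 * balsum k /\ cobal k.+2 = 2 * balsum k.+1 by [].
elim: k => [|k [IH1 IH2]]; first by rewrite !balsumS balsum0.
by split=> //; rewrite cobalSS IH1 IH2 balsumSS; lia.
Qed.

Lemma balsum_bal k : 4 * balsum k.+1 = 5 * bal k.+1 - bal k - 1.
Proof.
elim: k => [|k IH]; first by rewrite balsumS balsum0.
by have := balsumS k.+1; have := balSS k; lia.
Qed.

Lemma sum_bal_rev k : \sum_(i < k) bal (k - i) = balsum k.
Proof.
elim: k => [|k IH]; first by rewrite big_ord0 balsum0.
by rewrite big_ord_recl subn0 balsumS -IH addrC.
Qed.

Lemma bal_rec_uniq (R : comPzRingType) (N : nat) (u : nat -> R) :
  u 0%N = 0 -> (forall k, (0 < k < N)%N -> u k.+1 = 6 * u k - u k.-1) ->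
  forall k, (k <= N)%N -> u k = u 1%N * (bal k)%:~R.
Proof.
move=> u0 u_rec.
have pair k : (k < N)%N ->
    u k = u 1%N * (bal k)%:~R /\ u k.+1 = u 1%N * (bal k.+1)%:~R.
  elim: k => [|k IH] ltkN; first by rewrite u0 mulr0 mulr1.
  have [IH1 IH2] := IH (ltnW ltkN); split=> //.
  rewrite u_rec; last by lia.
  by rewrite [k.+1.-1]/= IH1 IH2 balSS intrB intrM; ring.
case=> [|k] lekN; first by rewrite u0 mulr0.
exact: (pair k lekN).2.
Qed.

Section TransitionMatrix.
Variables (R : comNzRingType) (n : nat) (q : R).

(* [p] read as a sequence on [nat], zero from index [n] on. *)
Definition rowext (p : 'rV[R]_n) (k : nat) : R := oapp (p 0) 0 (insub k).

Lemma rowextE (p : 'rV[R]_n) (i : 'I_n) : rowext p i = p 0 i.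
Proof. by rewrite /rowext valK. Qed.

Lemma rowext_ge (p : 'rV[R]_n) (k : nat) : (n <= k)%N -> rowext p k = 0.
Proof. by move=> lenk; rewrite /rowext insubF // ltnNge lenk. Qed.

Lemma sum_mul_indicator (p : 'rV[R]_n) (k : nat) (c : R) :
  \sum_(i < n) p 0 i * (if (i : nat) == k then c else 0) = rowext p k * c.
Proof.
rewrite /rowext; case: insubP => [i0 _ <-|Nk] /=.
  rewrite (bigD1 i0) //= eqxx big1 ?addr0 // => i /negPf ne_i_i0.
  by rewrite (inj_eq val_inj) ne_i_i0 mulr0.
rewrite mul0r big1 // => i _.
by case: eqP => [eq_ik|]; [rewrite -eq_ik ltn_ord in Nk | rewrite mulr0].
Qed.

Definition balrow : 'rV[R]_n := \row_(i < n) (bal (n - i))%:~R.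

Lemma rowext_balrow k : rowext balrow k = (bal (n - k))%:~R.
Proof.
case: (ltnP k n) => [ltkn|lenk]; first by rewrite (rowextE _ (Ordinal ltkn)) mxE.
by rewrite rowext_ge // (eqnP (_ : n - k == 0)%N) // subn_eq0.
Qed.

Lemma sum_balrow : \sum_(i < n) balrow 0 i = (balsum n)%:~R.
Proof.
rewrite -sum_bal_rev raddf_sum; apply: eq_bigr => i _; exact: mxE.
Qed.

Hypothesis n_gt2 : (2 < n)%N.

Lemma Pentry_col i j : (i < n)%N -> (0 < j < n)%N ->
  Pentry n q i j = (if i == j.-1 then q else 0)
                 + (if i == j then 1 - 6 * q else 0)
                 + (if i == j.+1 then q else 0).
Proof.
move=> ltin ltjn; rewrite /Pentry.
by repeat case: eqP => ? /=; subst; try lia; rewrite ?addr0 ?add0r.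
Qed.

Lemma Pentry_col0 i : (i < n)%N ->
  Pentry n q i 0 = 4 * q + (if i == 0%N then 1 - 5 * q else 0)
                 + (if i == 1%N then q else 0) + (if i == n.-1 then q else 0).
Proof.
move=> ltin; rewrite /Pentry.
by repeat case: eqP => ? /=; subst; try lia; rewrite ?addr0 ?add0r //; ring.
Qed.

Lemma mulmx_Pmat_col (p : 'rV[R]_n) (j : 'I_n) : (0 < j)%N ->
  (p *m Pmat n q) 0 j
  = rowext p j.-1 * q + rowext p j * (1 - 6 * q) + rowext p j.+1 * q.
Proof.
move=> j_gt0; rewrite !mxE.
under eq_bigr => i _ do rewrite !mxE Pentry_col ?ltn_ord ?j_gt0 // !mulrDr.
by rewrite !big_split /= !sum_mul_indicator.
Qed.

Lemma mulmx_Pmat_col0 (p : 'rV[R]_n) (j : 'I_n) : j = 0%N :> nat ->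
  (p *m Pmat n q) 0 j = (\sum_(i < n) p 0 i) * (4 * q)
    + rowext p 0 * (1 - 5 * q) + rowext p 1 * q + rowext p n.-1 * q.
Proof.
move=> j0; rewrite !mxE.
under eq_bigr => i _ do rewrite !mxE j0 Pentry_col0 ?ltn_ord // !mulrDr.
by rewrite !big_split /= !sum_mul_indicator mulr_suml.
Qed.

Lemma balrow_stationary : balrow *m Pmat n q = balrow.
Proof.
apply/rowP => j; case: (posnP j) => [j0|j_gt0].
  rewrite mulmx_Pmat_col0 // sum_balrow !rowext_balrow mxE j0 !subn0.
  case: n n_gt2 => // k _; rewrite subn1 subSnn /=.
  have -> : (balsum k.+1)%:~R * (4 * q) = (4 * balsum k.+1)%:~R * q :> R.
    by rewrite intrM; ring.
  by rewrite balsum_bal !intrB !intrM; ring.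
rewrite mulmx_Pmat_col // !rowext_balrow mxE.
have ltjn := ltn_ord j.
rewrite (_ : n - j.-1 = (n - j.+1).+2)%N; last by lia.
rewrite (_ : n - j = (n - j.+1).+1)%N; last by lia.
by rewrite balSS intrB intrM; ring.
Qed.

End TransitionMatrix.

Lemma stationary_balrow (R : idomainType) (n : nat) (q : R) (p : 'rV[R]_n) :
  (2 < n)%N -> q != 0 -> p *m Pmat n q = p ->
  p = rowext p n.-1 *: balrow R n.
Proof.
move=> n_gt2 q_neq0 p_stat.
have p_rec k : (0 < k < n)%N ->
    rowext p (n - k.+1) = 6 * rowext p (n - k) - rowext p (n - k.-1).
  case/andP=> k_gt0 ltkn; have ltjn : (n - k < n)%N by lia.
  have := congr1 (fun M : 'rV[R]_n => M 0 (Ordinal ltjn)) p_stat.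
  rewrite mulmx_Pmat_col //=; last by lia.
  rewrite -(rowextE p (Ordinal ltjn)) /=.
  rewrite (_ : (n - k).-1 = n - k.+1)%N; last by lia.
  rewrite (_ : (n - k).+1 = n - k.-1)%N; last by lia.
  set a := rowext p _; set b := rowext p _; set c := rowext p _ => col_j.
  suff : (a - (6 * b - c)) * q == 0.
    by rewrite mulf_eq0 (negPf q_neq0) orbF subr_eq0 => /eqP.
  have -> : (a - (6 * b - c)) * q = a * q + b * (1 - 6 * q) + c * q - b by ring.
  by rewrite col_j subrr.
have p_n : rowext p (n - 0) = 0 by rewrite subn0 rowext_ge.
have p_bal := @bal_rec_uniq _ n (fun k => rowext p (n - k)) p_n p_rec.
apply/rowP => i; rewrite !mxE -rowextE -subn1.
by rewrite -{1}(subKn (ltnW (ltn_ord i))) p_bal ?leq_subr.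
Qed.

Theorem theorem2p2 (R : realFieldType) (n : nat) (q : R) :
  (3 <= n)%N -> 0 < q -> q <= 1 / 6 ->
  let pi : 'rV[R]_n :=
    \row_(i < n) (2 * (bal (n - i))%:~R / (cobal n.+1)%:~R) in
  [/\ forall i : 'I_n,
        pi 0 i = (bal (n - i))%:~R / \sum_(1 <= l < n.+1) (bal l)%:~R,
      is_prob_vec pi,
      pi *m Pmat n q = pi &
      forall p : 'rV[R]_n, is_prob_vec p -> p *m Pmat n q = p -> p = pi].
Proof.
(* [q <= 1/6] only makes P(q) stochastic; the argument needs just [q != 0]. *)
move=> n_gt2 q_gt0 _ pi; set S : R := (balsum n)%:~R.
have S_gt0 : 0 < S.
  by rewrite ltr0z -(@prednK n) ?balsum_gt0 //; apply: leq_trans n_gt2.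
have S_neq0 : S != 0 := lt0r_neq0 S_gt0.
have piE : pi = S^-1 *: balrow R n.
  by apply/rowP => i; rewrite !mxE cobal_balsum intrM -/S; field.
have sum_scale_balrow c : \sum_(i < n) (c *: balrow R n) 0 i = c * S.
  by rewrite /S -sum_balrow mulr_sumr; apply: eq_bigr => i _; rewrite mxE.
split.
- by move=> i; rewrite piE !mxE /S raddf_sum mulrC.
- split; last by rewrite piE sum_scale_balrow mulVf.
  by move=> i; rewrite piE !mxE mulr_ge0 ?ler0z ?bal_ge0 // invr_ge0 ltW.
- by rewrite piE -scalemxAl balrow_stationary.
move=> p [_ p_sum] p_stat.
have := stationary_balrow n_gt2 (lt0r_neq0 q_gt0) p_stat; set c := rowext p _.
move=> p_eq; rewrite p_eq sum_scale_balrow in p_sum.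
rewrite p_eq piE; congr (_ *: _).
by apply: (mulIf S_neq0); rewrite p_sum mulVf.
Qed.
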